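(* Let $(a_n)_{n=1}^\infty$ and $(A_n)_{n=1}^\infty$ be sequences of real numbers such that (i) $0<a_{n+1}\le a_n/3$ for all $n\in\mathbb{N}$, and (ii) $\sum_{n=1}^\infty|A_n|/a_n<\infty$. Then the function $f$ on $[0,a_1]$ defined by $$f(x)=\frac{A_n-A_{n+1}}{a_n-a_{n+1}}(x-a_{n+1})+A_{n+1}\ \text{ if } x\in(a_{n+1},a_n],\qquad f(0)=0,$$ is a DCR function on $[0,a_1]$.
   Context: A function on an open interval is DC if it is the difference of two convex functions. A function defined on a nonempty set $D\subset\mathbb{R}$ is DCR if it is the restriction of a DC function defined on $\mathbb{R}$. *)

From Stdlib Require Import Reals.
From Coquelicot Require Import Coquelicot.
Open Scope R_scope.

Definition convex_on (I : R -> Prop) (f : R -> R) : Prop :=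
  forall x y t, I x -> I y -> 0 <= t <= 1 ->
    f (t * x + (1 - t) * y) <= t * f x + (1 - t) * f y.

Definition DC_on (I : R -> Prop) (g : R -> R) : Prop :=
  exists g1 g2 : R -> R, convex_on I g1 /\ convex_on I g2 /\
    forall x, I x -> g x = g1 x - g2 x.

Definition DCR (D : R -> Prop) (f : R -> R) : Prop :=
  (exists x, D x) /\
  exists g : R -> R, DC_on (fun _ => True) g /\ forall x, D x -> f x = g x.

(* On (a_{n+1}, a_n] the function f is affine with slope s_n, so f is the sum of
   the hinges (s_n - s_{n+1}) (x - a_{n+1})^+, which telescopes to the n-th affine
   piece because the pieces tend to 0.  Condition (i) gives a_n - a_{n+1} >= 2a_n/3,
   hence |s_n| <= 3/2 (|A_n|/a_n + |A_{n+1}|/a_{n+1}), so by (ii) the jumps of slope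
   are absolutely summable.  Splitting them into positive and negative parts writes
   the hinge series, a function on all of R, as a difference of two convex series. *)

From Stdlib Require Import Reals Lra Lia Psatz.
From Coquelicot Require Import Coquelicot.
Open Scope R_scope.

Lemma ex_series_Rabs_le (u v : nat -> R) :
  (forall n, Rabs (u n) <= v n) -> ex_series v -> ex_series u.
Proof. intros H. apply (ex_series_le u v). exact H. Qed.

Lemma Series_le_Series (u v : nat -> R) :
  (forall n, u n <= v n) -> ex_series u -> ex_series v -> Series u <= Series v.
Proof.
  intros Huv Hu Hv.
  assert (Hdiff : Series (fun n => 0 * u n) <= Series (fun n => v n - u n)).
  { apply Series_le; [intros n; specialize (Huv n); lra|].
    exact (ex_series_minus _ _ Hv Hu). }
  rewrite Series_scal_l, Series_minus in Hdiff by assumption. lra.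
Qed.

Lemma is_series_telescope (L : nat -> R) :
  is_lim_seq L 0 -> is_series (fun n => L n - L (S n)) (L O).
Proof.
  intros HL.
  assert (Hpartial : forall N, sum_n (fun n => L n - L (S n)) N = L O - L (S N)).
  { induction N as [|N IH].
    - rewrite sum_O. reflexivity.
    - rewrite sum_Sn, IH. change (L O - L (S N) + (L (S N) - L (S (S N))) = L O - L (S (S N))).
      ring. }
  change (is_lim_seq (sum_n (fun n => L n - L (S n))) (L O)).
  apply (is_lim_seq_ext (fun N => L O - L (S N))); [intros N; symmetry; apply Hpartial|].
  pose proof (is_lim_seq_minus' _ _ _ _ (is_lim_seq_const (L O))
                (proj1 (is_lim_seq_incr_1 L 0) HL)) as Hlim.
  rewrite Rminus_0_r in Hlim. exact Hlim.
Qed.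

Lemma convex_on_Series (I : R -> Prop) (g : nat -> R -> R) :
  (forall n, convex_on I (g n)) -> (forall x, ex_series (fun n => g n x)) ->
  convex_on I (fun x => Series (fun n => g n x)).
Proof.
  intros Hconv Hex x y t Ix Iy Ht.
  rewrite <- !Series_scal_l, <- Series_plus by exact (ex_series_scal_l _ _ (Hex _)).
  apply Series_le_Series; [intros n; apply Hconv; assumption|apply Hex|].
  exact (ex_series_plus _ _ (ex_series_scal_l _ _ (Hex x)) (ex_series_scal_l _ _ (Hex y))).
Qed.

Lemma convex_on_hinge (w b : R) :
  0 <= w -> convex_on (fun _ => True) (fun x => w * Rmax 0 (x - b)).
Proof.
  intros Hw x y t _ _ Ht.
  assert (Hhinge : Rmax 0 (t * x + (1 - t) * y - b)
                   <= t * Rmax 0 (x - b) + (1 - t) * Rmax 0 (y - b)).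
  { unfold Rmax; repeat destruct Rle_dec; nra. }
  nra.
Qed.

Lemma ex_series_hinge (w b : nat -> R) (x : R) :
  (forall n, 0 <= b n) -> ex_series (fun n => Rabs (w n)) ->
  ex_series (fun n => w n * Rmax 0 (x - b n)).
Proof.
  intros Hb Hw.
  apply (ex_series_Rabs_le _ (fun n => Rabs (w n) * Rabs x)).
  - intros n. rewrite Rabs_mult. apply Rmult_le_compat_l; [apply Rabs_pos|].
    specialize (Hb n). unfold Rmax, Rabs; repeat destruct Rle_dec; repeat destruct Rcase_abs; lra.
  - apply ex_series_scal_r. exact Hw.
Qed.

Lemma Series_hinge_eq0 (w b : nat -> R) (x : R) :
  (forall n, x <= b n) -> Series (fun n => w n * Rmax 0 (x - b n)) = 0.
Proof.
  intros Hxb.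
  rewrite (Series_ext _ (fun n => 0 * w n)), Series_scal_l; [ring|].
  intros n. specialize (Hxb n). rewrite Rmax_left by lra. ring.
Qed.

Lemma DC_on_hinge_series (c b : nat -> R) :
  (forall n, 0 <= b n) -> ex_series (fun n => Rabs (c n)) ->
  DC_on (fun _ => True) (fun x => Series (fun n => c n * Rmax 0 (x - b n))).
Proof.
  intros Hb Hc.
  set (pos := fun n => Rmax 0 (c n)). set (neg := fun n => Rmax 0 (- c n)).
  assert (Hsummable : forall w : nat -> R, (forall n, Rabs (w n) <= Rabs (c n)) ->
                        ex_series (fun n => Rabs (w n))).
  { intros w Hw. apply (ex_series_Rabs_le _ (fun n => Rabs (c n))); [|exact Hc].
    intros n. rewrite Rabs_Rabsolu. apply Hw. }
  assert (Hpos : ex_series (fun n => Rabs (pos n))).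
  { apply Hsummable. intros n. unfold pos, Rmax, Rabs; repeat destruct Rle_dec; repeat destruct Rcase_abs; lra. }
  assert (Hneg : ex_series (fun n => Rabs (neg n))).
  { apply Hsummable. intros n. unfold neg, Rmax, Rabs; repeat destruct Rle_dec; repeat destruct Rcase_abs; lra. }
  exists (fun x => Series (fun n => pos n * Rmax 0 (x - b n))),
         (fun x => Series (fun n => neg n * Rmax 0 (x - b n))).
  split; [|split].
  - apply convex_on_Series; [|intros x; apply ex_series_hinge; assumption].
    intros n. apply convex_on_hinge. apply Rmax_l.
  - apply convex_on_Series; [|intros x; apply ex_series_hinge; assumption].
    intros n. apply convex_on_hinge. apply Rmax_l.
  - intros x _. rewrite <- Series_minus by (apply ex_series_hinge; assumption).
    apply Series_ext. intros n.
    assert (Hsplit : c n = pos n - neg n) by (unfold pos, neg, Rmax; repeat destruct Rle_dec; lra).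
    rewrite Hsplit at 1. ring.
Qed.

Section PiecewiseAffine.

Variables a A : nat -> R.
Hypothesis a_succ_pos : forall n, 0 < a (S n).
Hypothesis a_succ_le_third : forall n, a (S n) <= a n / 3.
Hypothesis ex_series_ratio : ex_series (fun n => Rabs (A n) / a n).

Definition slope n := (A n - A (S n)) / (a n - a (S n)).
Definition kink n := slope n - slope (S n).
Definition piece n x := slope n * (x - a (S n)) + A (S n).

Lemma a_pos n : 0 < a n.
Proof.
  destruct n as [|n]; [|apply a_succ_pos].
  pose proof (a_succ_pos 0). pose proof (a_succ_le_third 0). lra.
Qed.

Lemma a_succ_lt n : a (S n) < a n.
Proof. pose proof (a_pos n). pose proof (a_succ_le_third n). lra. Qed.

Lemma a_antitone i j : (i <= j)%nat -> a j <= a i.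
Proof.
  induction 1 as [|j _ IH]; [lra|]. pose proof (a_succ_lt j). lra.
Qed.

Lemma a_le_geom n : a n <= a O * (1 / 3) ^ n.
Proof. induction n as [|n IH]; simpl; [lra|]. pose proof (a_succ_le_third n). lra. Qed.

Lemma a_cvg0 : is_lim_seq a 0.
Proof.
  apply (is_lim_seq_le_le (fun _ => 0) a (fun n => a O * (1 / 3) ^ n)).
  - intros n. split; [left; apply a_pos|apply a_le_geom].
  - apply is_lim_seq_const.
  - pose proof (is_lim_seq_mult' _ _ _ _ (is_lim_seq_const (a O))
                  (is_lim_seq_geom (1 / 3) ltac:(rewrite Rabs_pos_eq; lra))) as Hlim.
    rewrite Rmult_0_r in Hlim. exact Hlim.
Qed.

Lemma A_cvg0 : is_lim_seq A 0.
Proof.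
  apply is_lim_seq_abs_0.
  apply (is_lim_seq_ext (fun n => a n * (Rabs (A n) / a n))).
  - intros n. field. pose proof (a_pos n). lra.
  - pose proof (is_lim_seq_mult' _ _ _ _ a_cvg0 (ex_series_lim_0 _ ex_series_ratio)) as Hlim.
    rewrite Rmult_0_l in Hlim. exact Hlim.
Qed.

Lemma Rabs_slope_le n :
  Rabs (slope n) <= 3 / 2 * (Rabs (A n) / a n + Rabs (A (S n)) / a (S n)).
Proof.
  pose proof (a_pos n). pose proof (a_pos (S n)). pose proof (a_succ_le_third n).
  assert (Htri : Rabs (A n - A (S n)) <= Rabs (A n) + Rabs (A (S n))).
  { unfold Rminus. rewrite <- (Rabs_Ropp (A (S n))). apply Rabs_triang. }
  unfold slope. rewrite Rabs_div, (Rabs_pos_eq (a n - a (S n))) by lra.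
  apply Rmult_le_reg_r with (a n - a (S n)); [lra|].
  unfold Rdiv at 1. rewrite Rmult_assoc, Rinv_l, Rmult_1_r by lra.
  assert (Hn : Rabs (A n) = Rabs (A n) / a n * a n) by (field; lra).
  assert (Hs : Rabs (A (S n)) = Rabs (A (S n)) / a (S n) * a (S n)) by (field; lra).
  assert (0 <= Rabs (A n) / a n) by (apply Rdiv_le_0_compat; [apply Rabs_pos|lra]).
  assert (0 <= Rabs (A (S n)) / a (S n)) by (apply Rdiv_le_0_compat; [apply Rabs_pos|lra]).
  nra.
Qed.

Lemma ex_series_Rabs_slope : ex_series (fun n => Rabs (slope n)).
Proof.
  apply (ex_series_Rabs_le _ (fun n => 3 / 2 * (Rabs (A n) / a n + Rabs (A (S n)) / a (S n)))).
  - intros n. rewrite Rabs_Rabsolu. apply Rabs_slope_le.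
  - exact (ex_series_scal_l (3 / 2) _
             (ex_series_plus _ _ ex_series_ratio (proj1 (ex_series_incr_1 _) ex_series_ratio))).
Qed.

Lemma slope_cvg0 : is_lim_seq slope 0.
Proof. apply is_lim_seq_abs_0, ex_series_lim_0, ex_series_Rabs_slope. Qed.

Lemma ex_series_Rabs_kink : ex_series (fun n => Rabs (kink n)).
Proof.
  apply (ex_series_Rabs_le _ (fun n => Rabs (slope n) + Rabs (slope (S n)))).
  - intros n. rewrite Rabs_Rabsolu. unfold kink, Rminus.
    rewrite <- (Rabs_Ropp (slope (S n))). apply Rabs_triang.
  - exact (ex_series_plus _ _ ex_series_Rabs_slope
             (proj1 (ex_series_incr_1 _) ex_series_Rabs_slope)).
Qed.

Lemma piece_cvg0 x : is_lim_seq (fun n => piece n x) 0.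
Proof.
  pose proof (proj1 (is_lim_seq_incr_1 a 0) a_cvg0) as Ha.
  pose proof (proj1 (is_lim_seq_incr_1 A 0) A_cvg0) as HA.
  pose proof (is_lim_seq_plus' _ _ _ _
                (is_lim_seq_mult' _ _ _ _ slope_cvg0
                   (is_lim_seq_minus' _ _ _ _ (is_lim_seq_const x) Ha)) HA) as Hlim.
  replace (0 * (x - 0) + 0) with 0 in Hlim by ring. exact Hlim.
Qed.

(* Consecutive pieces agree at a_{n+1}, so they differ by the jump of slope there. *)
Lemma piece_sub_succ n x : piece n x - piece (S n) x = kink n * (x - a (S n)).
Proof.
  assert (Hjoin : A (S n) - A (S (S n)) = slope (S n) * (a (S n) - a (S (S n)))).
  { unfold slope. field. pose proof (a_succ_lt (S n)). lra. }
  unfold piece, kink. nra.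
Qed.

Lemma exists_piece x : 0 < x <= a O -> exists m, a (S m) < x <= a m.
Proof.
  intros Hx.
  destruct (proj2 (is_lim_seq_spec a 0) a_cvg0 (mkposreal x (proj1 Hx))) as [N HN].
  specialize (HN N (Nat.le_refl N)). simpl in HN.
  assert (HaN : a N < x) by (revert HN; unfold Rabs; destruct Rcase_abs; lra).
  clear HN. induction N as [|N IH]; [lra|].
  destruct (Rlt_or_le (a N) x) as [HxN|HxN]; [exact (IH HxN)|exists N; lra].
Qed.

Lemma is_series_kink_hinge m x : a (S m) < x <= a m ->
  is_series (fun n => kink n * Rmax 0 (x - a (S n))) (piece m x).
Proof.
  intros Hx.
  assert (Hterm : forall n, piece (max n m) x - piece (max (S n) m) x
                            = kink n * Rmax 0 (x - a (S n))).
  { intros n. destruct (Nat.lt_ge_cases n m) as [Hnm|Hmn].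
    - rewrite !Nat.max_r by lia.
      pose proof (a_antitone (S n) m Hnm). rewrite Rmax_left by lra. ring.
    - rewrite !Nat.max_l by lia. rewrite piece_sub_succ.
      pose proof (a_antitone (S m) (S n) ltac:(lia)). rewrite Rmax_right by lra. reflexivity. }
  apply (is_series_ext _ _ _ Hterm).
  apply (is_series_telescope (fun n => piece (max n m) x)).
  apply (is_lim_seq_ext_loc (fun n => piece n x)); [|apply piece_cvg0].
  exists m. intros n Hn. rewrite Nat.max_l by exact Hn. reflexivity.
Qed.

End PiecewiseAffine.

Theorem lemma4p1 (a A : nat -> R) (f : R -> R)
  (hpos : forall n, 0 < a (S n))
  (hdec : forall n, a (S n) <= a n / 3)
  (hsum : ex_series (fun n => Rabs (A n) / a n))
  (hf0 : f 0 = 0)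
  (hf : forall n x, a (S n) < x <= a n ->
      f x = (A n - A (S n)) / (a n - a (S n)) * (x - a (S n)) + A (S n)) :
  DCR (fun x => 0 <= x <= a O) f.
Proof.
  pose proof (a_pos a hpos hdec) as Hapos.
  split; [exists 0; pose proof (Hapos O); lra|].
  exists (fun x => Series (fun n => kink a A n * Rmax 0 (x - a (S n)))).
  split.
  - apply DC_on_hinge_series; [intros n; left; apply hpos|].
    exact (ex_series_Rabs_kink a A hpos hdec hsum).
  - intros x Hx. destruct (Req_dec x 0) as [->|Hx0].
    + rewrite hf0, Series_hinge_eq0; [reflexivity|intros n; left; apply hpos].
    + destruct (exists_piece a hpos hdec x ltac:(lra)) as [m Hm].
      rewrite (hf m x Hm). symmetry.
      exact (is_series_unique _ _ (is_series_kink_hinge a A hpos hdec hsum m x Hm)).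
Qed.
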